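(* Let $\Bbbk$ be a field of characteristic zero. Then $\mathrm{ch}\,\mathrm{OS}(\mathrm{Br}_n)^!_0=\mathrm{ch}\,\mathrm{VG}(\mathrm{Br}_n)^!_0=h_n$ for $n\ge1$; $\mathrm{ch}\,\mathrm{OS}(\mathrm{Br}_n)^!_1=h_2h_{n-2}$ for $n\ge2$; and $\mathrm{ch}\,\mathrm{VG}(\mathrm{Br}_n)^!_1=e_2h_{n-2}$ for $n\ge2$.
   Context: $\mathrm{OS}(\mathrm{Br}_n)=\bigwedge_\Bbbk(x_{ij}:1\le i<j\le n)/(x_{ij}x_{ik}-x_{ij}x_{jk}+x_{ik}x_{jk}:i<j<k)$ and $\mathrm{VG}(\mathrm{Br}_n)=\Bbbk[x_{ij}]/(x_{ij}x_{ik}-x_{ij}x_{jk}+x_{ik}x_{jk},\ x_{ij}^2)$, with $\mathfrak S_n$ acting by $\sigma(x_{ij})=x_{\sigma(i)\sigma(j)}$, where $x_{ji}=x_{ij}$ in $\mathrm{OS}$ and $x_{ji}=-x_{ij}$ in $\mathrm{VG}$. Koszul duals: writing the algebra as $\Bbbk\langle x_{ij}\rangle/I$, the dual is $\Bbbk\langle y_{ij}\rangle/(I_2^\perp)$ with $(y_ay_b,x_cx_d)=\delta_{ac}\delta_{bd}$ and the same action rule on $y_{ij}$. $\mathrm{ch}$ is the Frobenius characteristic map from $\Bbbk\mathfrak S_n$-modules to degree-$n$ symmetric functions; $h_k$, $e_k$ are complete homogeneous and elementary symmetric functions ($h_0=1$). *)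

From HB Require Import structures.
From mathcomp Require Import all_boot all_order all_algebra all_fingroup.
From mathcomp Require Import mpoly.

Set Implicit Arguments.
Unset Strict Implicit.
Unset Printing Implicit Defensive.

Import GRing.Theory.
Local Open Scope ring_scope.

Section KoszulDualBraid.

Variable F : fieldType.
Variable n : nat.

(* Generators x_ij (and dual generators y_ij), 1 <= i < j <= n, indexed by
   pairs (i, j) of 'I_n with i < j. *)
Definition gen := {p : 'I_n * 'I_n | (p.1 < p.2)%N}.

Definition spair (i j : 'I_n) : 'I_n * 'I_n :=
  if (i < j)%N then (i, j) else (j, i).

Lemma spairP (s : 'S_n) (a : gen) :
  ((spair (s (val a).1) (s (val a).2)).1 < (spair (s (val a).1) (s (val a).2)).2)%N.
Proof.
case: a => [[i j] /= lij]; rewrite /spair.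
have nij : (nat_of_ord (s i)) != s j.
  by apply/negP => /eqP/val_inj/perm_inj eij; move: lij; rewrite eij ltnn.
case: (ltnP (s i) (s j)) => h //=.
by rewrite ltn_neqAle h andbT eq_sym.
Qed.

(* sigma(y_ij) = +/- y_{sigma(i) sigma(j)}, rewritten with increasing indices *)
Definition gact (s : 'S_n) (a : gen) : gen := exist (fun p : 'I_n * 'I_n => (p.1 < p.2)%N) _ (spairP s a).

(* The sign: y_ji = y_ij (signed = false, OS case),
             y_ji = - y_ij (signed = true, VG case). *)
Definition gsign (signed : bool) (s : 'S_n) (a : gen) : F :=
  if signed && ~~ (s (val a).1 < s (val a).2)%N then -1 else 1.

(* Words of length d in the generators: basis of the degree-d part of the
   free (tensor) algebra. *)
Definition W (d : nat) := (d.-tuple gen)%type.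
Definition N (d : nat) := #|{: W d}|.

Definition tact (s : 'S_n) d (w : W d) : W d := map_tuple (gact s) w.
Definition tsign (signed : bool) (s : 'S_n) d (w : W d) : F :=
  \prod_(a <- w) gsign signed s a.

(* Matrix of the action of s on the degree-d part of the free algebra on
   the y's, acting on row vectors: row w is s.(y_w). *)
Definition actmx (signed : bool) (s : 'S_n) d : 'M[F]_(N d) :=
  \matrix_(i, j) (tsign signed s (enum_val i) *
                  ((tact s (enum_val i) == enum_val j)%:R)).

Definition w2 (a b : gen) : 'rV[F]_(N 2) :=
  \row_j ((enum_val j == [tuple a; b])%:R).

(* Arnold relations x_ij x_ik - x_ij x_jk + x_ik x_jk, i < j < k, indexed by
   triples (a, b, c) = ((i,j), (i,k), (j,k)). *)
Definition arnold_cond (t : gen * gen * gen) : bool :=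
  [&& (val t.1.1).1 == (val t.1.2).1,
      (val t.1.1).2 == (val t.2).1 &
      (val t.1.2).2 == (val t.2).2].

Definition arnold_rels : 'M[F]_(#|{: gen * gen * gen}|, N 2) :=
  \matrix_(k < #|{: gen * gen * gen}|)
    (let t := enum_val k in
     if arnold_cond t then w2 t.1.1 t.1.2 - w2 t.1.1 t.2 + w2 t.1.2 t.2
     else 0).

Definition square_rels : 'M[F]_(#|{: gen}|, N 2) :=
  \matrix_(k < #|{: gen}|) w2 (enum_val k) (enum_val k).

Definition anticomm_rels : 'M[F]_(#|{: gen * gen}|, N 2) :=
  \matrix_(k < #|{: gen * gen}|)
    (w2 (enum_val k).1 (enum_val k).2 + w2 (enum_val k).2 (enum_val k).1).
Definition comm_rels : 'M[F]_(#|{: gen * gen}|, N 2) :=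
  \matrix_(k < #|{: gen * gen}|)
    (w2 (enum_val k).1 (enum_val k).2 - w2 (enum_val k).2 (enum_val k).1).

(* Spanning sets (as rows) of I_2, the degree-2 part of the ideal I with
   OS(Br_n) = k<x>/I, resp. VG(Br_n) = k<x>/I. *)
Definition OS_rels := col_mx arnold_rels (col_mx anticomm_rels square_rels).
Definition VG_rels := col_mx arnold_rels (col_mx comm_rels square_rels).

Section Dual.
Variables (r : nat) (R : 'M[F]_(r, N 2)).

(* I_2^perp for the pairing (y_a y_b, x_c x_d) = delta_ac delta_bd:
   row space of perp. *)
Definition perp : 'M[F]_(N 2) := kermx R^T.

(* Degree-d part of the two-sided ideal generated by I_2^perp in the free
   algebra on the y's: spanned by u (x) phi (x) v, phi in I_2^perp, u, v words.
   Row indexed by (positions (p, p+1), context word w0, row of perp). *)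
Definition Jidx d := ('I_d * 'I_d * W d * 'I_(N 2))%type.

Definition Jmx d : 'M[F]_(#|{: Jidx d}|, N d) :=
  \matrix_(k < #|{: Jidx d}|, j < N d)
    (let: (pq, w0, rr) := (enum_val k : Jidx d) in
     let: (p, q) := pq in
     let w : W d := enum_val j in
     if ((q : nat) == p.+1) &&
        [forall t : 'I_d, ((t != p) && (t != q)) ==> (tnth w t == tnth w0 t)]
     then perp rr (enum_rank [tuple tnth w p; tnth w q])
     else 0).

(* Character of s on the degree-d part A^!_d = T_d / J_d of the Koszul dual:
   trace on T_d minus trace of the restriction to the (stable) subspace J_d. *)
Definition kdual_char (signed : bool) d (s : 'S_n) : F :=
  let B := row_base (Jmx d) in
  \tr (actmx signed s d) - \tr (B *m actmx signed s d *m pinvmx B).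

End Dual.

(* Symmetric functions of degree n, realized faithfully in n variables. *)
Definition psum (k : nat) : {mpoly F[n]} := \sum_(i < n) 'X_i ^+ k.
Definition pcyc (s : 'S_n) : {mpoly F[n]} :=
  \prod_(C in porbits s) psum #|C|.
Definition hcomp (k : nat) : {mpoly F[n]} :=
  \sum_(m : 'X_{1..n < k.+1} | mdeg m == k) 'X_[m].
Definition elem (k : nat) : {mpoly F[n]} := mesym n F k.

Definition frob (chi : 'S_n -> F) : {mpoly F[n]} :=
  (n`!%:R)^-1 *: \sum_(s : 'S_n) chi s *: pcyc s.

End KoszulDualBraid.

Definition ch_OS_dual (F : fieldType) (n d : nat) : {mpoly F[n]} :=
  frob (kdual_char (@OS_rels F n) false d).
Definition ch_VG_dual (F : fieldType) (n d : nat) : {mpoly F[n]} :=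
  frob (kdual_char (@VG_rels F n) true d).

(* Since J is generated in degree 2, J_0 = J_1 = 0: A^!_0 is the trivial
   representation and A^!_1 is spanned by the y_ij, which S_n permutes, with
   the extra sign y_ji = -y_ij for VG.
   Writing p_cyc(s) as the sum of the monomials x^f over the colourings
   f : [n] -> [n] that are constant on the cycles of s, ch(chi) becomes 1/n!
   times the sum of chi(s) x^f over pairs (f, s) with s stabilizing f; by
   orbit-stabilizer every orbit then contributes its weight with multiplicity
   n! (characteristic zero lets us divide by n! and by 2).  In degree 0 the
   orbits are the sorted colourings, which gives h_n.  In degree 1 the orbit of
   a pair (y_ij, f) is determined by the sorted values of f on {i, j} and off
   {i, j}, which gives h_2 h_(n-2).  For VG, if f(i) = f(j) the transposition
   (i j) stabilizes (y_ij, f) and flips the sign, so the signed stabilizer sum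
   vanishes; only the orbits with f(i) <> f(j) survive, giving e_2 h_(n-2). *)

From Pilot Require Import Defs.
From mathcomp Require Import all_boot all_order all_algebra all_fingroup.
From mathcomp Require Import mpoly zify.
Import Order.TTheory GRing.Theory.
Local Open Scope ring_scope.

Set Implicit Arguments.
Unset Strict Implicit.
Unset Printing Implicit Defensive.

Section OrbitClassSums.
Variables (gT : finGroupType) (X : finType) (to : {action gT &-> X}).
Variables (I : eqType) (cls : X -> I).
Hypothesis cls_act : forall x a, cls (to x a) = cls x.
Hypothesis cls_orbit : forall x y, cls x = cls y -> exists a, to x a = y.

Lemma cls_eq_orbit x y : (cls y == cls x) = (y \in orbit to setT x).
Proof.
apply/eqP/orbitP => [/esym/cls_orbit[a <-] | [a _ <-]]; last exact: cls_act.
by exists a; rewrite ?inE.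
Qed.

Lemma sum_card_astab1_class x0 :
  (\sum_(x | cls x == cls x0) #|'C[x | to]%g|)%N = #|gT|.
Proof.
have card_stab x : x \in orbit to setT x0 ->
    (#|'C[x | to]%g| * #|orbit to setT x0|)%N = #|gT|.
  move=> /orbit_eqP <-; have := card_orbit_stab to [set: gT]%G x.
  by rewrite setTI cardsT mulnC.
have orbit_gt0 : (0 < #|orbit to setT x0|)%N.
  by apply/card_gt0P; exists x0; apply: orbit_refl.
apply/eqP; rewrite -(eqn_pmul2r orbit_gt0) (eq_bigl _ _ (cls_eq_orbit x0)).
by rewrite big_distrl (eq_bigr _ card_stab) sum_nat_const /= mulnC.
Qed.

Variables (V : nmodType) (w : I -> V) (L : seq I).
Hypotheses (L_uniq : uniq L) (L_codom : L =i codom cls).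

Lemma sum_card_astab1 :
  \sum_x w (cls x) *+ #|'C[x | to]%g| = (\sum_(i <- L) w i) *+ #|gT|.
Proof.
have cls_L x : cls x \in L by rewrite L_codom codom_f.
transitivity (\sum_x \sum_(i <- L) if cls x == i then w i *+ #|'C[x | to]%g| else 0).
  apply: eq_bigr => x _; rewrite -big_mkcond -big_filter.
  by rewrite (eq_filter (fun i => eq_sym _ i)) filter_pred1_uniq // big_seq1.
rewrite exchange_big -sumrMnl big_seq [RHS]big_seq; apply: eq_bigr => i.
rewrite L_codom => /codomP[x0 ->]; rewrite -big_mkcond sumrMnr /=.
by rewrite sum_card_astab1_class.
Qed.

End OrbitClassSums.

Section ProdAction.
Variables (gT : finGroupType) (X Y : finType).
Variables (toX : {action gT &-> X}) (toY : {action gT &-> Y}).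

Definition prod_act (xy : X * Y) a := (toX xy.1 a, toY xy.2 a).

Lemma prod_act1 : prod_act^~ 1%g =1 id.
Proof. by case=> x y; rewrite /prod_act !act1. Qed.

Lemma prod_actM xy : act_morph prod_act xy.
Proof. by case: xy => x y a b; rewrite /prod_act !actM. Qed.

Definition prod_action := TotalAction prod_act1 prod_actM.

Lemma astab1_prod_action x y :
  'C[(x, y) | prod_action]%g = ('C[x | toX] :&: 'C[y | toY])%g.
Proof.
apply/setP => a; apply/astab1P/setIP => /= [[xa ya] | [/astab1P xa /astab1P ya]].
  by split; apply/astab1P.
by rewrite /prod_act /= xa ya.
Qed.

End ProdAction.

Section TupleAction.
Variables (n : nat) (T : finType).

Definition tuple_act (f : n.-tuple T) (s : 'S_n) : n.-tuple T :=
  [tuple tnth f (s^-1%g i) | i < n].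

Lemma tuple_act1 : tuple_act^~ 1%g =1 id.
Proof. by move=> f; apply: eq_from_tnth => i; rewrite tnth_mktuple invg1 perm1. Qed.

Lemma tuple_actM f : act_morph tuple_act f.
Proof. by move=> s t; apply: eq_from_tnth => i; rewrite !tnth_mktuple invMg permM. Qed.

Definition tuple_action := TotalAction tuple_act1 tuple_actM.

Lemma perm_tuple_act (f : n.-tuple T) s : perm_eq (tuple_act f s) f.
Proof. by apply/tuple_permP; exists s^-1%g. Qed.

Lemma perm_eq_tuple_act (f g : n.-tuple T) : perm_eq f g -> exists s, tuple_act f s = g.
Proof.
case/tuple_permP=> s fE; exists s; apply: eq_from_tnth => i.
by rewrite tnth_mktuple (tnth_nth (tnth g i)) fE -tnth_nth tnth_mktuple permKV.
Qed.

Lemma astab1_tuple_actP (f : n.-tuple T) (s : 'S_n) :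
  reflect (forall i, tnth f (s i) = tnth f i) (s \in 'C[f | tuple_action]%g).
Proof.
apply: (iffP astab1P) => /= [fE i | fixf].
  by rewrite -[in LHS]fE tnth_mktuple permK.
by apply: eq_from_tnth => i; rewrite tnth_mktuple -[in RHS](permKV s i) fixf.
Qed.

Lemma astab1_tuple_act_porbit (f : n.-tuple T) (s : 'S_n) i j :
  s \in 'C[f | tuple_action]%g -> j \in porbit s i -> tnth f j = tnth f i.
Proof.
move=> /astab1_tuple_actP fix_f /porbitP[k ->].
elim: k => [|k IHk]; first by rewrite expg0 perm1.
by rewrite expgSr permM fix_f.
Qed.

End TupleAction.

Section SortedClasses.
Variables (n : nat) (d : Order.disp_t) (T : finOrderType d).

Lemma sort_tuple_act (f : n.-tuple T) s : sort <=%O (tuple_act f s) = sort <=%O f.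
Proof. exact/perm_sort_leP/perm_tuple_act. Qed.

Lemma sort_eq_tuple_act (f g : n.-tuple T) :
  sort <=%O f = sort <=%O g -> exists s, tuple_act f s = g.
Proof. by move/perm_sort_leP; apply: perm_eq_tuple_act. Qed.

End SortedClasses.

Lemma perm_eq_flagged (T : eqType) (u v : seq (T * bool)) :
  perm_eq [seq z.1 | z <- u & z.2] [seq z.1 | z <- v & z.2] ->
  perm_eq [seq z.1 | z <- u & ~~ z.2] [seq z.1 | z <- v & ~~ z.2] ->
  perm_eq u v.
Proof.
have split_flags (w : seq (T * bool)) :
    perm_eq w ([seq (t, true) | t <- [seq z.1 | z <- w & z.2]] ++
               [seq (t, false) | t <- [seq z.1 | z <- w & ~~ z.2]]).
  rewrite -!map_comp (@map_id_in _ _ [seq z <- w | z.2]); last first.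
    by case=> t [] //; rewrite mem_filter.
  rewrite (@map_id_in _ _ [seq z <- w | ~~ z.2]); last by case=> t [] //; rewrite mem_filter.
  by rewrite perm_sym perm_filterC.
move=> perm_true perm_false; apply: perm_trans (split_flags u) _.
rewrite perm_sym; apply: perm_trans (split_flags v) _.
by apply: perm_cat; apply: perm_map; rewrite perm_sym.
Qed.

Lemma sum_group_opp_eq0 (gT : finGroupType) (H : {group gT}) (R : idomainType)
    (g : gT -> R) t :
  2%:R != 0 :> R -> t \in H -> (forall s, g (t * s)%g = - g s) -> \sum_(s in H) g s = 0.
Proof.
move=> two_neq0 tH g_opp; set S := \sum_(s in H) g s.
have S_opp : S = - S.
  rewrite {1}/S (reindex_inj (mulgI t)) /= -sumrN.
  by apply: eq_big => [s | s _]; rewrite ?groupMl ?g_opp.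
have : 2%:R * S == 0 by rewrite mulr_natl mulr2n {1}S_opp addNr.
by rewrite mulf_eq0 (negbTE two_neq0) => /eqP.
Qed.

Section Monomials.
Variables (R : comNzRingType) (n : nat).

Definition xmono (s : seq 'I_n) : {mpoly R[n]} := \prod_(i <- s) 'X_i.

Lemma perm_xmono s1 s2 : perm_eq s1 s2 -> xmono s1 = xmono s2.
Proof. exact: perm_big. Qed.

Definition mcount (s : seq 'I_n) : 'X_{1..n} := [multinom count_mem i s | i < n].

Lemma mcount_nil : mcount [::] = 0%MM.
Proof. by apply/mnmP => j; rewrite !mnmE. Qed.

Lemma mcount_cons i s : mcount (i :: s) = (U_(i) + mcount s)%MM.
Proof. by apply/mnmP => j; rewrite mnmDE !mnmE. Qed.

Lemma xmonoE s : xmono s = 'X_[mcount s].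
Proof.
elim: s => [|i s IHs]; first by rewrite /xmono big_nil mcount_nil mpolyX0.
by rewrite /xmono big_cons -/(xmono s) IHs mcount_cons mpolyXD.
Qed.

Lemma mdeg_mcount s : mdeg (mcount s) = size s.
Proof.
elim: s => [|i s IHs]; first by rewrite mcount_nil mdeg0.
by rewrite mcount_cons mdegD mdeg1 IHs.
Qed.

Lemma sorted_mcount_inj s1 s2 :
  sorted <=%O s1 -> sorted <=%O s2 -> mcount s1 = mcount s2 -> s1 = s2.
Proof.
move=> sorted1 sorted2 eq12; apply: le_sorted_eq => //; apply/allP => i _.
by have := congr1 (fun m : 'X_{1..n} => m i) eq12; rewrite !mnmE => /eqP.
Qed.

Lemma mcount_sorted_surj (m : 'X_{1..n}) : exists2 s, sorted <=%O s & mcount s = m.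
Proof.
exists (sort <=%O (flatten [seq nseq (m i) i | i <- enum 'I_n])).
  exact: sort_le_sorted.
apply/mnmP => j; rewrite mnmE count_sort count_flatten -map_comp sumnE.
rewrite big_map big_enum (bigD1 j) //= count_nseq /= eqxx mul1n big1 ?addn0 //.
by move=> i /negbTE ij; rewrite count_nseq /= ij.
Qed.

Definition sorted_seqs k : seq (seq 'I_n) :=
  map val (enum [pred s : k.-tuple 'I_n | sorted <=%O s]).

Lemma uniq_sorted_seqs k : uniq (sorted_seqs k).
Proof. by rewrite map_inj_uniq ?enum_uniq //; apply: val_inj. Qed.

Lemma mem_sorted_seqs k s : (s \in sorted_seqs k) = sorted <=%O s && (size s == k).
Proof.
apply/mapP/andP => [[t] | [sorted_s size_s]].
  by rewrite mem_enum => sorted_t ->; rewrite size_tuple.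
by exists (Tuple size_s); rewrite ?mem_enum.
Qed.

End Monomials.

Section SymmetricFunctions.
Variables (F : fieldType) (n : nat).
Local Notation tact := (tuple_action n 'I_n).

Lemma hcomp_sorted_seqs k : hcomp F n k = \sum_(s <- sorted_seqs n k) xmono F s.
Proof.
rewrite big_map big_enum /=.
have deg_lt (t : k.-tuple 'I_n) : (mdeg (mcount t) < k.+1)%N.
  by rewrite mdeg_mcount size_tuple.
pose bcount (t : k.-tuple 'I_n) : 'X_{1..n < k.+1} := BMultinom (deg_lt t).
rewrite (partition_big bcount (fun m : 'X_{1..n < k.+1} => mdeg m == k)); last first.
  by move=> t _; rewrite /= mdeg_mcount size_tuple.
apply: eq_bigr => m /eqP deg_m; have [s sorted_s count_s] := mcount_sorted_surj m.
have size_s : size s == k by rewrite -mdeg_mcount count_s deg_m.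
rewrite (big_pred1 (Tuple size_s)) /= ?xmonoE ?count_s // => t /=.
apply/andP/eqP => [[sorted_t /eqP count_t] | ->]; last by rewrite -val_eqE /= count_s.
by apply: val_inj; apply: sorted_mcount_inj; rewrite //= count_s -count_t.
Qed.

Lemma elem_sorted_seqs k :
  elem F n k = \sum_(s <- sorted_seqs n k) (uniq s)%:R *: xmono F s.
Proof.
rewrite /elem mesym_tupleE big_map big_enum /= [LHS]big_mkcond [RHS]big_mkcond.
apply: eq_bigr => t _; rewrite /tmono sorted_map.
rewrite (@eq_sorted _ _ <%O); last by move=> i j; rewrite ltEord.
rewrite lt_sorted_uniq_le inE -/(xmono F t).
by case: (uniq t); case: (sorted _ _); rewrite ?scale1r ?scale0r.
Qed.

Lemma pcyc_fixed_tuples (i0 : 'I_n) (s : 'S_n) :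
  pcyc F s = \sum_(f : n.-tuple 'I_n | s \in 'C[f | tact]%g) xmono F f.
Proof.
have porbitS i : porbit s (s i) = porbit s i by have := porbit_perm s 1 i; rewrite expg1.
pose rep (C : {set 'I_n}) := odflt i0 [pick i in C].
have rep_porbit C : C \in porbits s -> porbit s (rep C) = C.
  case/imsetP => i _ ->; apply/eqP; rewrite eq_porbit_mem /rep.
  by case: pickP => [j //|/(_ i)]; rewrite porbit_id.
have rep_mem C : C \in porbits s -> rep C \in C.
  by move=> PC; rewrite -{2}(rep_porbit C PC) porbit_id.
pose orbit_tuple (g : {ffun {set 'I_n} -> 'I_n}) := [tuple g (porbit s i) | i < n].
pose restrict (f : n.-tuple 'I_n) : {ffun {set 'I_n} -> 'I_n} :=
  [ffun C => if C \in porbits s then tnth f (rep C) else i0].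
have restrictK f : s \in 'C[f | tact]%g -> orbit_tuple (restrict f) = f.
  move=> fix_f; apply: eq_from_tnth => i; rewrite tnth_mktuple ffunE imset_f //.
  exact/(astab1_tuple_act_porbit fix_f)/rep_mem/imset_f.
rewrite (reindex_onto orbit_tuple restrict restrictK) /pcyc /psum (big_distr_big_dep i0).
apply: eq_big => g.
  have -> : s \in 'C[orbit_tuple g | tact]%g.
    by apply/astab1_tuple_actP => i; rewrite !tnth_mktuple porbitS.
  apply/pfamilyP/eqP => [[/supportP g_supp _] | <-].
    apply/ffunP => C; rewrite ffunE; case: ifPn => [PC | /g_supp //].
    by rewrite tnth_mktuple rep_porbit.
  by split=> //; apply/supportP => C /negbTE nPC; rewrite ffunE nPC.
move=> _; rewrite /xmono big_tuple (partition_big_imset (porbit s)) /=.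
apply: eq_bigr => C /imsetP[i _ ->]; rewrite -prodr_const.
apply: eq_big => j; first by rewrite eq_porbit_mem.
by rewrite tnth_mktuple -eq_porbit_mem => /eqP ->.
Qed.

Lemma frob_astab1 (i0 : 'I_n) (chi : 'S_n -> F) :
  frob chi = (n`!%:R)^-1 *:
    \sum_(f : n.-tuple 'I_n) \sum_(s in 'C[f | tact]%g) chi s *: xmono F f.
Proof.
rewrite /frob; congr (_ *: _).
under eq_bigr do rewrite (pcyc_fixed_tuples i0) scaler_sumr.
by rewrite (exchange_big_dep xpredT).
Qed.

Lemma eq_frob (chi1 chi2 : 'S_n -> F) :
  chi1 =1 chi2 -> frob chi1 = frob chi2.
Proof. by move=> chi12; rewrite /frob; congr (_ *: _); apply: eq_bigr => s _; rewrite chi12. Qed.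

End SymmetricFunctions.

Section LowDegreeCharacters.
Variables (F : fieldType) (n r : nat) (R : 'M[F]_(r, N n 2)).

Lemma Jmx_le1 d : (d <= 1)%N -> Jmx R d = 0.
Proof.
move=> d_le1; apply/matrixP => k w; rewrite !mxE.
case: (enum_val k) => [[[p q] w0] rr] /=.
by rewrite ltn_eqF //; have := ltn_ord q; lia.
Qed.

Lemma tr_actmx signed s d :
  \tr (actmx F signed s d) = \sum_(w : W n d) tsign F signed s w * (tact s w == w)%:R.
Proof.
rewrite /mxtrace; under eq_bigr do rewrite mxE.
rewrite -(big_enum_val (A := {: W n d}) (fun w => tsign F signed s w * (tact s w == w)%:R)).
by apply: eq_bigl => w; rewrite inE.
Qed.

Lemma kdual_char_le1 signed d s :
  (d <= 1)%N -> kdual_char R signed d s = \tr (actmx F signed s d).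
Proof.
move=> d_le1; rewrite /kdual_char Jmx_le1 // [X in _ - X]/mxtrace big1 ?subr0 //.
by case=> i lt_i; exfalso; move: lt_i; rewrite mxrank0.
Qed.

Lemma kdual_char0 signed s : kdual_char R signed 0 s = 1.
Proof.
rewrite kdual_char_le1 // tr_actmx (big_pred1 [tuple]) => [|w].
  by rewrite /tsign big_nil mul1r [tact _ _]tuple0 eqxx.
by apply/esym/eqP/tuple0.
Qed.

Definition gen_char signed (s : 'S_n) : F :=
  \sum_(a : gen n) gsign F signed s a * (Defs.gact s a == a)%:R.

Lemma kdual_char1 signed s : kdual_char R signed 1 s = gen_char signed s.
Proof.
rewrite kdual_char_le1 // tr_actmx (reindex (fun a : gen n => [tuple a])) /=.
  apply: eq_bigr => a _; rewrite /tsign big_seq1 -val_eqE /=.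
  by rewrite eqseq_cons andbT.
exists (fun w : W n 1 => thead w) => [a _ | w _]; first by rewrite theadE.
by case: w => [[|b [|? ?]] //] ?; apply: val_inj.
Qed.

End LowDegreeCharacters.

Section DegreeZero.
Variables (F : fieldType) (n : nat).
Hypothesis charF0 : [pchar F] =i pred0.

Lemma natr_fact_neq0 : (n`!%:R : F) != 0.
Proof. by move/pcharf0P: charF0 => ->; rewrite -lt0n fact_gt0. Qed.

Lemma frob_one (n_gt0 : (0 < n)%N) : frob (fun=> 1 : F) = hcomp F n n.
Proof.
rewrite (frob_astab1 (Ordinal n_gt0)).
under eq_bigr do rewrite -scaler_suml sumr_const -scalerMnl scale1r
  -(perm_xmono _ (permEl (perm_sort <=%O _))).
rewrite (@sum_card_astab1 _ _ _ _ (fun f => sort <=%O (val f)) _ _ _ _ (sorted_seqs n n)).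
- by rewrite -hcomp_sorted_seqs card_Sn -scaler_nat scalerA mulVf ?scale1r ?natr_fact_neq0.
- exact: sort_tuple_act.
- exact: sort_eq_tuple_act.
- exact: uniq_sorted_seqs.
move=> s; rewrite mem_sorted_seqs; apply/idP/codomP => [/andP[sorted_s size_s] | [f ->]].
  by exists (Tuple size_s); rewrite /= sort_le_id.
by rewrite size_sort size_tuple sort_le_sorted eqxx.
Qed.

End DegreeZero.

Section GeneratorAction.
Variable n : nat.

Lemma spairC (i j : 'I_n) : i != j -> spair i j = spair j i.
Proof.
move=> ij; rewrite /spair; case: ltngtP => // eq_ij.
by move: ij; rewrite -val_eqE /= eq_ij eqxx.
Qed.

Definition gen_act (a : gen n) (s : 'S_n) := Defs.gact s a.

Lemma gen_act1 : gen_act^~ 1%g =1 id.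
Proof. by case=> [[i j] /= lt_ij]; apply: val_inj; rewrite /= !perm1 /spair lt_ij. Qed.

Lemma gen_actM a : act_morph gen_act a.
Proof.
case: a => [[i j] /= lt_ij] s t; apply: val_inj; rewrite /= !permM.
have /negbTE s_ij : s i != s j by rewrite (inj_eq perm_inj) -val_eqE /= ltn_eqF.
rewrite [spair (s i) (s j)]/spair; case: ifP => _ //=.
by rewrite spairC // (inj_eq perm_inj) s_ij.
Qed.

Definition gen_action := TotalAction gen_act1 gen_actM.

Definition gsupp (a : gen n) : {set 'I_n} := [set (val a).1; (val a).2].

Lemma gsupp_act a s t : (t \in gsupp (gen_act a s)) = ((s^-1)%g t \in gsupp a).
Proof.
have eq_perm u : (t == s u) = ((s^-1)%g t == u).
  by apply/eqP/eqP => [-> | <-]; rewrite ?permK ?permKV.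
by rewrite !inE /gen_act /= /spair; case: ifP => _ /=; rewrite !eq_perm // orbC.
Qed.

Lemma gsupp_inj : injective gsupp.
Proof.
case=> [[i j] /= lt_ij] [[k l] /= lt_kl] /setP supp_eq; apply: val_inj => /=.
have := supp_eq i; have := supp_eq j; have := supp_eq k; have := supp_eq l.
rewrite !inE /= !eqxx ?orbT -!val_eqE /= => El Ek Ej Ei.
have [ik jl] : (i = k :> nat) /\ (j = l :> nat) by lia.
by congr pair; apply: val_inj.
Qed.

End GeneratorAction.

Section MarkedTuples.
Variable n : nat.
Local Notation pair_action := (prod_action (gen_action n) (tuple_action n 'I_n)).
Local Notation marked := (gen n * n.-tuple 'I_n)%type.

(* (y_ij, f) is recorded as f with the positions i and j flagged, so that
   orbits of such pairs become orbits of tuples. *)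
Definition marks (x : marked) : n.-tuple ('I_n * bool) :=
  [tuple (tnth x.2 t, t \in gsupp x.1) | t < n].

Lemma marks_act x s : marks (pair_action x s) = tuple_act (marks x) s.
Proof. by apply: eq_from_tnth => t; rewrite !tnth_mktuple /= gsupp_act. Qed.

Lemma marks_inj : injective marks.
Proof.
case=> a f [b g] eq_marks.
have eq_at t : (tnth f t, t \in gsupp a) = (tnth g t, t \in gsupp b).
  by have := congr1 (fun m => tnth m t) eq_marks; rewrite !tnth_mktuple.
congr pair; last by apply: eq_from_tnth => t; case: (eq_at t).
by apply: gsupp_inj; apply/setP => t; case: (eq_at t).
Qed.

Definition supp_values (x : marked) := [seq tnth x.2 t | t <- enum 'I_n & t \in gsupp x.1].
Definition off_values (x : marked) := [seq tnth x.2 t | t <- enum 'I_n & t \notin gsupp x.1].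

Definition marked_values x := (sort <=%O (supp_values x), sort <=%O (off_values x)).

Lemma marks_supp_values x : [seq z.1 | z <- marks x & z.2] = supp_values x.
Proof. by rewrite /= filter_map -map_comp. Qed.

Lemma marks_off_values x : [seq z.1 | z <- marks x & ~~ z.2] = off_values x.
Proof. by rewrite /= filter_map -map_comp. Qed.

Lemma marked_values_act x s : marked_values (pair_action x s) = marked_values x.
Proof.
have perm_marks : perm_eq (marks (pair_action x s)) (marks x).
  by rewrite marks_act perm_tuple_act.
rewrite /marked_values -!marks_supp_values -!marks_off_values.
by congr pair; apply/perm_sort_leP; rewrite perm_map // perm_filter.
Qed.

Lemma marked_values_orbit x y :
  marked_values x = marked_values y -> exists s, pair_action x s = y.
Proof.
rewrite /marked_values -!marks_supp_values -!marks_off_values.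
case=> /perm_sort_leP perm_supp /perm_sort_leP perm_off.
have /perm_eq_tuple_act[s act_xy] : perm_eq (marks x) (marks y).
  exact: perm_eq_flagged perm_supp perm_off.
by exists s; apply: marks_inj; rewrite marks_act.
Qed.

Lemma perm_filter_gsupp (a : gen n) :
  perm_eq [seq t <- enum 'I_n | t \in gsupp a] [:: (val a).1; (val a).2].
Proof.
apply: uniq_perm; first by rewrite filter_uniq ?enum_uniq.
  by case: a => [[i j] /= lt_ij]; rewrite inE andbT -val_eqE /= ltn_eqF.
by move=> t; rewrite mem_filter mem_enum andbT !inE.
Qed.

Lemma perm_supp_values (x : marked) :
  perm_eq (supp_values x) [:: tnth x.2 (val x.1).1; tnth x.2 (val x.1).2].
Proof. exact: perm_map (perm_filter_gsupp x.1). Qed.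

Lemma perm_values (x : marked) : perm_eq x.2 (supp_values x ++ off_values x).
Proof. by rewrite -map_cat -{1}(map_tnth_enum x.2) perm_map // perm_sym perm_filterC. Qed.

Lemma xmono_marked_values (R : comNzRingType) (x : marked) :
  xmono R x.2 = xmono R (marked_values x).1 * xmono R (marked_values x).2.
Proof.
rewrite /xmono -big_cat; apply: perm_big; apply: perm_trans (perm_values x) _.
by apply: perm_cat; rewrite perm_sym perm_sort.
Qed.

Lemma uniq_marked_values (x : marked) :
  uniq (marked_values x).1 = (tnth x.2 (val x.1).1 != tnth x.2 (val x.1).2).
Proof. by rewrite sort_uniq (perm_uniq (perm_supp_values x)) /= inE andbT. Qed.

Lemma size_marked_values (x : marked) :
  size (marked_values x).1 = 2 /\ size (marked_values x).2 = (n - 2)%N.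
Proof.
rewrite !size_sort (perm_size (perm_supp_values x)); split => //.
have := perm_size (perm_values x).
by rewrite size_cat size_tuple (perm_size (perm_supp_values x)) /=; lia.
Qed.

Lemma marked_values_surj (n_gt1 : (1 < n)%N) nu mu :
  sorted <=%O nu -> size nu = 2 -> sorted <=%O mu -> size mu = (n - 2)%N ->
  exists x, marked_values x = (nu, mu).
Proof.
case: nu => [|y [|z [|? ?]]] // sorted_nu _ sorted_mu size_mu.
have size_f : size ([:: y; z] ++ mu) == n by rewrite /= size_mu; apply/eqP; lia.
pose x : marked := (exist _ (Ordinal (ltnW n_gt1), Ordinal n_gt1) isT, Tuple size_f).
have perm_supp : perm_eq (supp_values x) [:: y; z].
  by apply: perm_trans (perm_supp_values x) _; rewrite !(tnth_nth y).
have : perm_eq ([:: y; z] ++ mu) ([:: y; z] ++ off_values x).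
  by apply: perm_trans (perm_values x) _; rewrite perm_cat2r.
rewrite perm_cat2l => perm_off; exists x; congr pair.
  by rewrite (perm_sort_leP _ _ perm_supp) sort_le_id.
by rewrite -(perm_sort_leP _ _ perm_off) sort_le_id.
Qed.

End MarkedTuples.

Section GeneratorSigns.
Variables (F : fieldType) (n : nat).
Local Notation pair_action := (prod_action (gen_action n) (tuple_action n 'I_n)).
Local Notation marked := (gen n * n.-tuple 'I_n)%type.

Lemma gsign_astab1 b (x : marked) s :
  s \in 'C[x | pair_action]%g -> tnth x.2 (val x.1).1 != tnth x.2 (val x.1).2 ->
  gsign F b s x.1 = 1.
Proof.
case: x => [[[i j] /= lt_ij] f]; rewrite astab1_prod_action.
case/setIP => /astab1P fix_a /astab1_tuple_actP fix_f neq_f.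
have := congr1 val fix_a; rewrite /gsign /= /spair.
case: ltnP => [_ _ | _ [_ si]]; first by rewrite andbF.
by move: neq_f; rewrite -si fix_f eqxx.
Qed.

Lemma gsign_tperm (a : gen n) s :
  gsign F true (tperm (val a).1 (val a).2 * s)%g a = - gsign F true s a.
Proof.
case: a => [[i j] /= lt_ij]; rewrite /gsign /= !permM tpermL tpermR.
have : s i != s j by rewrite (inj_eq perm_inj) -val_eqE /= ltn_eqF.
by rewrite -val_eqE /=; case: ltngtP => //= _ _; rewrite opprK.
Qed.

Lemma tperm_astab1 (x : marked) :
  tnth x.2 (val x.1).1 = tnth x.2 (val x.1).2 ->
  tperm (val x.1).1 (val x.1).2 \in 'C[x | pair_action]%g.
Proof.
case: x => [[[i j] /= lt_ij] f] eq_f; rewrite astab1_prod_action; apply/setIP; split.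
  by apply/astab1P; apply: val_inj; rewrite /= tpermL tpermR /spair ltnNge (ltnW lt_ij).
by apply/astab1_tuple_actP => t; case: tpermP => [-> | -> | //]; rewrite eq_f.
Qed.

Lemma sum_gsign_astab1 (two_neq0 : 2%:R != 0 :> F) b (x : marked) :
  \sum_(s in 'C[x | pair_action]%g) gsign F b s x.1 =
  (~~ b || uniq (marked_values x).1)%:R *+ #|'C[x | pair_action]%g|.
Proof.
rewrite uniq_marked_values; case: b => /=.
  have [eq_f | neq_f] := eqVneq (tnth x.2 (val x.1).1) (tnth x.2 (val x.1).2).
    rewrite mul0rn.
    exact: sum_group_opp_eq0 two_neq0 (tperm_astab1 eq_f) (gsign_tperm x.1).
  by rewrite -sumr_const; apply: eq_bigr => s /gsign_astab1->.
by rewrite -sumr_const; apply: eq_bigr => s _; rewrite /gsign.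
Qed.

End GeneratorSigns.

Section DegreeOne.
Variables (F : fieldType) (n : nat).
Hypothesis charF0 : [pchar F] =i pred0.
Local Notation pair_action := (prod_action (gen_action n) (tuple_action n 'I_n)).
Local Notation marked := (gen n * n.-tuple 'I_n)%type.

Lemma frob_gen_char_astab1 (i0 : 'I_n) b :
  frob (gen_char F b) = (n`!%:R)^-1 *:
    \sum_(x : marked) (\sum_(s in 'C[x | pair_action]%g) gsign F b s x.1) *: xmono F x.2.
Proof.
pose G a f := (\sum_(s in 'C[(a, f) | pair_action]%g) gsign F b s a) *: xmono F f.
rewrite (frob_astab1 i0) (eq_bigr (fun x => G x.1 x.2)) => [|[] //].
rewrite -pair_bigA exchange_big /=; congr (_ *: _).
apply: eq_bigr => f _; under eq_bigr do rewrite scaler_suml.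
rewrite exchange_big /=; apply: eq_bigr => a _.
rewrite /G astab1_prod_action setIC; under [in RHS]eq_bigl do rewrite in_setI.
rewrite big_mkcondr scaler_suml; apply: eq_bigr => s _.
have -> : (Defs.gact s a == a) = (s \in 'C[a | gen_action n]%g) by apply/eqP/astab1P.
by case: (_ \in _); rewrite ?mulr1 ?mulr0 ?scale0r.
Qed.

Lemma frob_gen_char (n_gt1 : (1 < n)%N) b :
  frob (gen_char F b) = (if b then elem F n 2 else hcomp F n 2) * hcomp F n (n - 2).
Proof.
have two_neq0 : 2%:R != 0 :> F by move/pcharf0P: charF0 => ->.
have first_factor : (if b then elem F n 2 else hcomp F n 2) =
                    \sum_(p <- sorted_seqs n 2) (~~ b || uniq p)%:R *: xmono F p.
  case: b; first exact: elem_sorted_seqs.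
  by rewrite hcomp_sorted_seqs; apply: eq_bigr => p _; rewrite scale1r.
pose w (p : seq 'I_n * seq 'I_n) := (~~ b || uniq p.1)%:R *: (xmono F p.1 * xmono F p.2).
rewrite (frob_gen_char_astab1 (Ordinal (ltnW n_gt1))).
rewrite (eq_bigr (fun x => w (marked_values x) *+ #|'C[x | pair_action]%g|)) => [|x _]; last first.
  by rewrite sum_gsign_astab1 // -scalerMnl (xmono_marked_values F x).
rewrite (@sum_card_astab1 _ _ _ _ (@marked_values n) _ _ _ w
           [seq (p1, p2) | p1 <- sorted_seqs n 2, p2 <- sorted_seqs n (n - 2)]).
- rewrite card_Sn -scaler_nat scalerA mulVf ?natr_fact_neq0 // scale1r big_allpairs.
  rewrite first_factor hcomp_sorted_seqs big_distrl; apply: eq_bigr => p1 _.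
  by rewrite big_distrr; apply: eq_bigr => p2 _; rewrite /w scalerAl.
- exact: marked_values_act.
- exact: marked_values_orbit.
- by rewrite allpairs_uniq ?uniq_sorted_seqs // => -[? ?] [? ?] _ _ [-> ->].
move=> p; apply/allpairsP/codomP => [[[nu mu] /= [nuL muL ->]] | [x ->]].
  move: nuL muL; rewrite !mem_sorted_seqs => /andP[sorted_nu /eqP size_nu].
  case/andP=> sorted_mu /eqP size_mu.
  have [x xE] := marked_values_surj n_gt1 sorted_nu size_nu sorted_mu size_mu.
  by exists x; rewrite xE.
have [size_supp size_off] := size_marked_values x.
exists (marked_values x); rewrite !mem_sorted_seqs size_supp size_off /=.
by rewrite !sort_le_sorted !eqxx.
Qed.

End DegreeOne.

Theorem propositionB1 (F : fieldType) (charF0 : [pchar F] =i pred0) (n : nat) :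
  ((1 <= n)%N ->
     ch_OS_dual F n 0 = hcomp F n n /\ ch_VG_dual F n 0 = hcomp F n n) /\
  ((2 <= n)%N ->
     ch_OS_dual F n 1 = hcomp F n 2 * hcomp F n (n - 2) /\
     ch_VG_dual F n 1 = elem F n 2 * hcomp F n (n - 2)).
Proof.
split => [n_gt0 | n_gt1]; split; rewrite /ch_OS_dual /ch_VG_dual.
- by rewrite (eq_frob (kdual_char0 _ _)) frob_one.
- by rewrite (eq_frob (kdual_char0 _ _)) frob_one.
- by rewrite (eq_frob (kdual_char1 _ _)) (frob_gen_char charF0 n_gt1 false).
by rewrite (eq_frob (kdual_char1 _ _)) (frob_gen_char charF0 n_gt1 true).
Qed.
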